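(* Let $G$ be a graph and $r\ge4$. Let $\{A,B\}$ be an $r$-local $2$-separation of $G$ with separator $\{a',v\}$ such that $a'v$ is an edge of $G$, and let $\{A',B'\}$ be an $r$-local $2$-separation of $G$ with separator $\{a,v\}$ such that $av$ is an edge of $G$ and $a\ne a'$. Suppose that $a\in A$ and $a'\in A'$, and that $v$ is not an $r$-local cutvertex of $G$. Then $B\cap B'=\{v\}$.
   Context: Ball $B_r(v)$: the subgraph of all vertices and edges on closed walks of length $\le r$ through $v$; $v$ is an $r$-local cutvertex if $B_r(v)-v$ is disconnected. For $X=\{v_0,v_1\}$, $N(X)$ is the set of vertices outside $X$ adjacent to a vertex of $X$; the connectivity graph $C_r(v_0,v_1)$ has vertex set $N(X)$, with $a,b$ adjacent if for some $i\in\{0,1\}$ they lie in the same component of $B_r(v_i)-v_0-v_1$. $X$ is an $r$-local $2$-separator if $C_r(v_0,v_1)$ is disconnected and $d_G(v_0,v_1)\le r/2$. An $r$-local $2$-separation with separator $X$ is a pair $\{A,B\}$ with $A\cap B=X$ an $r$-local 2-separator such that $A\setminus X$ and $B\setminus X$ are nonempty and partition $N(X)$ so that the vertex set of each component of $C_r(v_0,v_1)$ lies in exactly one of them (so $A\cup B=X\cup N(X)$). *)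

From mathcomp Require Import all_boot.
Set Implicit Arguments. Unset Strict Implicit. Unset Printing Implicit Defensive.

(* A graph is a finite simple graph: vertex type T : finType, adjacency e : rel T,
   assumed symmetric and irreflexive in the theorem. *)

Section LocalSep.
Variables (T : finType) (e : rel T).

(* p is the tail of a closed walk v = x0, x1, ..., xk = v of length k = size p <= r *)
Definition closed_walk (r : nat) (v : T) (p : seq T) : Prop :=
  path e v p /\ last v p = v /\ size p <= r.

Definition ball_V (r : nat) (v : T) (x : T) : Prop :=
  exists p, closed_walk r v p /\ x \in v :: p.

Definition ball_E (r : nat) (v : T) (x y : T) : Prop :=
  exists p, closed_walk r v p /\ exists i, i < size p /\
    ((nth v (v :: p) i = x /\ nth v p i = y) \/
     (nth v (v :: p) i = y /\ nth v p i = x)).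

Definition sub_conn (V : T -> Prop) (E : T -> T -> Prop) (x y : T) : Prop :=
  V x /\ exists p : seq T, last x p = y /\ (forall z, z \in p -> V z) /\
    forall i, i < size p -> E (nth x (x :: p) i) (nth x p i).

Definition disconnected (V : T -> Prop) (E : T -> T -> Prop) : Prop :=
  exists x y, V x /\ V y /\ ~ sub_conn V E x y.

Definition delV (V : T -> Prop) (S : {set T}) : T -> Prop :=
  fun x => V x /\ x \notin S.
Definition delE (E : T -> T -> Prop) (S : {set T}) : T -> T -> Prop :=
  fun x y => E x y /\ x \notin S /\ y \notin S.

Definition local_cutvertex (r : nat) (v : T) : Prop :=
  disconnected (delV (ball_V r v) [set v]) (delE (ball_E r v) [set v]).

Definition nbhd (X : {set T}) : {set T} :=
  [set x | (x \notin X) && [exists u in X, e u x]].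

(* adjacency in the connectivity graph C_r(v0,v1) *)
Definition conn_adj (r : nat) (v0 v1 : T) (a b : T) : Prop :=
  sub_conn (delV (ball_V r v0) [set v0; v1]) (delE (ball_E r v0) [set v0; v1]) a b \/
  sub_conn (delV (ball_V r v1) [set v0; v1]) (delE (ball_E r v1) [set v0; v1]) a b.

Definition connectivity_V (v0 v1 : T) : T -> Prop :=
  fun x => x \in nbhd [set v0; v1].

Definition dist_le_half (r : nat) (v0 v1 : T) : Prop :=
  exists p, path e v0 p /\ last v0 p = v1 /\ 2 * size p <= r.

Definition local_2_separator (r : nat) (v0 v1 : T) : Prop :=
  v0 != v1 /\
  disconnected (connectivity_V v0 v1) (conn_adj r v0 v1) /\
  dist_le_half r v0 v1.

Definition local_2_separation (r : nat) (A B : {set T}) (v0 v1 : T) : Prop :=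
  let X := [set v0; v1] in
  A :&: B = X /\ local_2_separator r v0 v1 /\
  A :\: X != set0 /\ B :\: X != set0 /\
  (A :\: X) :|: (B :\: X) = nbhd X /\ [disjoint A :\: X & B :\: X] /\
  (forall x y, sub_conn (connectivity_V v0 v1) (conn_adj r v0 v1) x y ->
     (x \in A) = (y \in A)).

End LocalSep.

From mathcomp Require Import all_boot.
From Stdlib Require Import Classical.

Set Implicit Arguments.
Unset Strict Implicit.
Unset Printing Implicit Defensive.

(* Suppose y <> v lies in B and in B'.  Then y is a neighbour of {a',v} outside
   A and a neighbour of {a,v} outside A'.  If y is adjacent to v, then y and a
   both lie in B_r(v) - v, which is connected; following a path from y to a
   until it first meets a or a' joins y to a in B_r(v) - {a',v} or to a' in
   B_r(v) - {a,v}.  Otherwise y is adjacent to both a and a', and the closed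
   walk v a y a' v of length 4 <= r puts the edge ay into B_r(v) - {a',v}.
   Either way y is adjacent to a in C_r(a',v), or to a' in C_r(a,v), so it
   lies in A or in A', a contradiction. *)

Section SubConn.
Variables (T : finType) (V : T -> Prop) (E : T -> T -> Prop).

Lemma sub_conn_refl (x : T) : V x -> sub_conn V E x x.
Proof. by move=> Vx; split=> //; exists [::]. Qed.

Lemma sub_conn_cons (x z y : T) :
  V x -> E x z -> sub_conn V E z y -> sub_conn V E x y.
Proof.
move=> Vx Exz [Vz [p [pz [pV pE]]]]; split=> //; exists (z :: p); split=> //.
split=> [w /predU1P[->|] //|]; first exact: pV.
case=> [//|i] /= ltip.
by rewrite (set_nth_default z) 1?(set_nth_default z x) ?(ltnW ltip) //; apply: pE.
Qed.

Lemma sub_conn_edge (x y : T) : V x -> V y -> E x y -> sub_conn V E x y.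
Proof. by move=> Vx Vy Exy; exact: sub_conn_cons Vx Exy (sub_conn_refl Vy). Qed.

Lemma sub_conn_ind (P : T -> T -> Prop) :
  (forall x, V x -> P x x) ->
  (forall x z y, V x -> E x z -> sub_conn V E z y -> P z y -> P x y) ->
  forall x y, sub_conn V E x y -> P x y.
Proof.
move=> Prefl Pcons x y [Vx [p]]; elim: p x Vx => [|z p IHp] x Vx [/= xy [pV pE]].
  by rewrite -xy; apply: Prefl.
have Vz : V z by apply: pV; rewrite mem_head.
have pzV : forall w, w \in p -> V w by move=> w wp; apply: pV; rewrite inE wp orbT.
have Epz : forall i, i < size p -> E (nth z (z :: p) i) (nth z p i).
  move=> i ltip; have := pE i.+1 ltip.
  by rewrite /= (set_nth_default z) 1?(set_nth_default z x) // ltnW.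
have conn_zy : sub_conn V E z y by split=> //; exists p.
by apply: (Pcons x z) => //; [exact: (pE 0) | apply: IHp].
Qed.

End SubConn.

Section FirstHit.
Variables (T : finType) (V : T -> Prop) (E : T -> T -> Prop) (S : {set T}).

Lemma sub_conn_first_hit (a b x : T) :
  a != b -> x != b -> sub_conn (delV V S) (delE E S) x a ->
  sub_conn (delV V (b |: S)) (delE E (b |: S)) x a \/
  sub_conn (delV V (a |: S)) (delE E (a |: S)) x b.
Proof.
have notin_U1 w c : w != c -> w \notin S -> w \notin c |: S.
  by move=> wc wS; rewrite in_setU1 negb_or wc.
move=> + + conn_xa; move: x a conn_xa.
apply: sub_conn_ind => [x [Vx xS] _ xb | x z y [Vx xS] [Exz [_ zS]] [[Vz _] _] IH yb xb].
  by left; apply: sub_conn_refl; split; last exact: notin_U1.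
have [<- | xy] := eqVneq x y.
  by left; apply: sub_conn_refl; split; last exact: notin_U1.
have [zb | zb] := eqVneq z b.
  have zy : z != y by rewrite zb eq_sym.
  by right; rewrite -zb; apply: sub_conn_edge; do ?split; try exact: notin_U1.
have [zy | zy] := eqVneq z y.
  by left; rewrite -zy; apply: sub_conn_edge; do ?split; try exact: notin_U1.
by case: (IH yb zb) => conn_z; [left | right]; apply: sub_conn_cons conn_z;
  do ?split; try exact: notin_U1.
Qed.

End FirstHit.

Section LocalSeparation.
Variables (T : finType) (e : rel T).
Hypotheses (e_sym : symmetric e) (e_irr : irreflexive e).

Lemma mem_nbhd (X : {set T}) (u x : T) :
  u \in X -> e u x -> x \notin X -> x \in nbhd e X.
Proof. by move=> uX eux xX; rewrite inE xX; apply/existsP; exists u; rewrite uX. Qed.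

Lemma nbhd_set2_adj (u w x : T) : x \in nbhd e [set u; w] -> e u x \/ e w x.
Proof. by rewrite inE => /andP[_ /existsP[z /andP[/set2P[]-> ezx]]]; [left | right]. Qed.

Section Separation.
Variables (r : nat) (A B : {set T}) (v0 v1 : T).
Hypothesis sepAB : local_2_separation e r A B v0 v1.

Lemma local_2_separation_subB : [set v0; v1] \subset B.
Proof. by case: sepAB => <- _; apply: subsetIr. Qed.

Lemma local_2_separation_outside (x : T) :
  x \in B -> x \notin [set v0; v1] -> x \notin A /\ x \in nbhd e [set v0; v1].
Proof.
case: sepAB => AB [_ [_ [_ [<- _]]]] xB xX; split.
  by apply: contraNN xX => xA; rewrite -AB inE xA.
by rewrite in_setU !in_setD xB xX orbT.
Qed.

Lemma local_2_separation_conn_adj (x y : T) :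
  x \in nbhd e [set v0; v1] -> y \in nbhd e [set v0; v1] ->
  conn_adj e r v0 v1 x y -> (x \in A) = (y \in A).
Proof.
case: sepAB => _ [_ [_ [_ [_ [_ sideA]]]]] xN yN adj_xy; apply: sideA.
exact: sub_conn_edge.
Qed.

End Separation.

Lemma ball_V_adj (r : nat) (v x : T) : 2 <= r -> e v x -> ball_V e r v x.
Proof.
move=> r2 evx; exists [:: x; v]; split; last by rewrite !inE eqxx orbT.
by split; first by rewrite /= evx e_sym evx.
Qed.

Lemma not_local_cutvertex_conn (r : nat) (v x y : T) :
  2 <= r -> ~ local_cutvertex e r v -> e v x -> e v y ->
  sub_conn (delV (ball_V e r v) [set v]) (delE (ball_E e r v) [set v]) x y.
Proof.
move=> r2 not_cut evx evy; apply: NNPP => not_conn; apply: not_cut.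
have notin_v z : e v z -> z \notin [set v].
  by move=> evz; rewrite in_set1; apply: contraTneq evz => ->; rewrite e_irr.
by exists x, y; do !split; rewrite ?notin_v //; apply: ball_V_adj.
Qed.

Lemma conn_adj_either (r : nat) (a a' v y : T) :
  4 <= r -> e a v -> e a' v -> a != a' -> ~ local_cutvertex e r v ->
  y != a' -> y != v -> e v y \/ (e a y /\ e a' y) ->
  conn_adj e r a' v y a \/ conn_adj e r a v y a'.
Proof.
move=> r4 eav ea'v aa' not_cut ya' yv [evy | [eay ea'y]].
  have r2 : 2 <= r by apply: leq_trans r4.
  have eva : e v a by rewrite e_sym.
  have := not_local_cutvertex_conn r2 not_cut evy eva.
  by case/(sub_conn_first_hit aa' ya') => conn; [left | right]; right.
have av : a != v by apply: contraTneq eav => ->; rewrite e_irr.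
have walk : closed_walk e r v [:: a; y; a'; v].
  by split; first by rewrite /= -(e_sym a) eav eay e_sym ea'y ea'v.
have in_ball z : z \in [:: v; a; y; a'; v] -> ball_V e r v z by exists [:: a; y; a'; v].
left; right; apply: sub_conn_edge.
- by split; [apply: in_ball; rewrite !inE eqxx !orbT | rewrite !inE negb_or ya' yv].
- by split; [apply: in_ball; rewrite !inE eqxx !orbT | rewrite !inE negb_or aa' av].
- split; last by rewrite !inE !negb_or ya' yv aa' av.
  by exists [:: a; y; a'; v]; split=> //; exists 1; split=> //; right.
Qed.

End LocalSeparation.

Theorem lemma5p11 (T : finType) (e : rel T) (e_sym : symmetric e)
  (e_irr : irreflexive e) (r : nat) (hr : 4 <= r)
  (A B A' B' : {set T}) (a a' v : T) :
  local_2_separation e r A B a' v -> e a' v ->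
  local_2_separation e r A' B' a v -> e a v ->
  a != a' -> a \in A -> a' \in A' ->
  ~ local_cutvertex e r v ->
  B :&: B' = [set v].
Proof.
move=> sepAB ea'v sepAB' eav aa' aA a'A' not_cut.
have av : a != v by apply: contraTneq eav => ->; rewrite e_irr.
have a'v : a' != v by apply: contraTneq ea'v => ->; rewrite e_irr.
have a_out : a \notin [set a'; v] by rewrite !inE negb_or aa' av.
have a'_out : a' \notin [set a; v] by rewrite !inE negb_or eq_sym aa' a'v.
have aN : a \in nbhd e [set a'; v] by apply: mem_nbhd (set22 _ _) _ a_out; rewrite e_sym.
have a'N : a' \in nbhd e [set a; v] by apply: mem_nbhd (set22 _ _) _ a'_out; rewrite e_sym.
apply/setP => y; rewrite in_setI in_set1.
have [-> | yv] := eqVneq y v.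
  rewrite (subsetP (local_2_separation_subB sepAB)) ?set22 //.
  by rewrite (subsetP (local_2_separation_subB sepAB')) ?set22.
apply/negbTE/andP => -[yB yB'].
have ya' : y != a'.
  by apply: contraTneq a'A' => ya'; subst y; case: (local_2_separation_outside sepAB' yB' a'_out).
have ya : y != a.
  by apply: contraTneq aA => ya; subst y; case: (local_2_separation_outside sepAB yB a_out).
have y_out : y \notin [set a'; v] by rewrite !inE negb_or ya' yv.
have y_out' : y \notin [set a; v] by rewrite !inE negb_or ya yv.
have [yA yN] := local_2_separation_outside sepAB yB y_out.
have [yA' yN'] := local_2_separation_outside sepAB' yB' y_out'.
have y_adj : e v y \/ (e a y /\ e a' y).
  by case: (nbhd_set2_adj yN) (nbhd_set2_adj yN'); tauto.
case: (conn_adj_either e_sym e_irr hr eav ea'v aa' not_cut ya' yv y_adj) => adj.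
  by move: yA; rewrite (local_2_separation_conn_adj sepAB yN aN adj) aA.
by move: yA'; rewrite (local_2_separation_conn_adj sepAB' yN' a'N adj) a'A'.
Qed.
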